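(* In the MHAV setting described in the context, suppose there is $b>0$ such that for all $\lambda\in\Lambda$ and all $y,y'\in Y$ with $\phi_Y(y,y')>0$, $$\frac{\bar\Pi(\lambda,y')\,\phi_Y(y',y)}{\bar\Pi(\lambda,y)\,\phi_Y(y,y')}>b.$$ Then the Markov kernel $\bar P_{\mathrm{MH}}$ on $\Lambda\times Y$ is irreducible and aperiodic.
   Context: MHAV setting: $Y$ is a finite nonempty set, $f:Y\to\mathbb{R}$; $\Lambda=\{\lambda_1<\lambda_2<\dots<\lambda_n\}$ is a finite set of positive reals with $n\ge2$; $\bar\Pi(\lambda,y)=\lambda^{-f(y)}/Z$ on $\Lambda\times Y$ with $Z=\sum_{\lambda,y}\lambda^{-f(y)}$. $\phi_Y$ is an irreducible Markov kernel on $Y$. For $\alpha'\in(0,1)$, $\phi_\Lambda$ is the kernel on $\Lambda$ with $\phi_\Lambda(\lambda_1,\lambda_2)=1$, $\phi_\Lambda(\lambda_n,\lambda_{n-1})=1$, and for $1<i<n$, $\phi_\Lambda(\lambda_i,\lambda_{i+1})=\alpha'$, $\phi_\Lambda(\lambda_i,\lambda_{i-1})=1-\alpha'$, all other entries $0$. For $\alpha,\beta\in(0,1)$ with $\alpha+\beta<1$, the proposal $\bar\phi$ on $\Lambda\times Y$ is $\bar\phi[(\lambda,y),(\lambda',y')]=\alpha\phi_\Lambda(\lambda,\lambda')$ if $\lambda\ne\lambda',y=y'$; $=\beta\phi_Y(y,y')$ if $\lambda=\lambda',y\ne y'$; $=(1-\alpha-\beta)+\beta\phi_Y(y,y)$ if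 $\lambda=\lambda',y=y'$; and $=0$ if $\lambda\ne\lambda',y\ne y'$. The acceptance probability is $\bar{\mathsf{Acc}}(x,x')=\min\{1,\frac{\bar\phi(x',x)\bar\Pi(x')}{\bar\phi(x,x')\bar\Pi(x)}\}$ and $\bar P_{\mathrm{MH}}(x,x')=\bar\phi(x,x')\bar{\mathsf{Acc}}(x,x')$ for $x\ne x'$, $\bar P_{\mathrm{MH}}(x,x)=1-\sum_{x'\ne x}\bar\phi(x,x')\bar{\mathsf{Acc}}(x,x')$. *)

From HB Require Import structures.
From mathcomp Require Import all_boot all_order all_algebra.
From mathcomp Require Import reals exp.
Set Implicit Arguments. Unset Strict Implicit. Unset Printing Implicit Defensive.
Import Order.TTheory GRing.Theory Num.Theory.
Local Open Scope ring_scope.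

Section Kernels.
Variables (R : realType) (T : finType).

Fixpoint kpow (K : T -> T -> R) (m : nat) (x y : T) : R :=
  match m with
  | 0%N => (x == y)%:R
  | m'.+1 => \sum_(z : T) K x z * kpow K m' z y
  end.

Definition markov_kernel (K : T -> T -> R) : Prop :=
  (forall x y, 0 <= K x y) /\ (forall x, \sum_(y : T) K x y = 1).

Definition irreducible (K : T -> T -> R) : Prop :=
  forall x y, exists m : nat, 0 < kpow K m x y.

(* aperiodic: for every x, gcd{ m >= 1 : K^m(x,x) > 0 } = 1, i.e. the only
   common divisor of all return times is 1 *)
Definition aperiodic (K : T -> T -> R) : Prop :=
  forall x (d : nat),
    (forall m : nat, (0 < m)%N -> 0 < kpow K m x x -> (d %| m)%N) -> d = 1%N.
End Kernels.

Section MHAV.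
Variables (R : realType) (Y : finType) (n : nat) (lam : 'I_n -> R) (f : Y -> R).

Definition piw (x : 'I_n * Y) : R := powR (lam x.1) (- f x.2).
Definition Zc : R := \sum_(x : 'I_n * Y) piw x.
Definition Pibar (x : 'I_n * Y) : R := piw x / Zc.

(* phi_Lambda on indices 0..n-1 (lambda_{i+1} <-> index i) *)
Definition phiL (alpha' : R) (i j : 'I_n) : R :=
  if val i == 0%N then (val j == 1%N)%:R
  else if val i == n.-1 then (val j == n.-2)%:R
  else if val j == (val i).+1 then alpha'
  else if (val j).+1 == val i then 1 - alpha'
  else 0.

Definition phibar (phiY : Y -> Y -> R) (alpha' alpha beta : R)
    (x x' : 'I_n * Y) : R :=
  if (x.1 != x'.1) && (x.2 == x'.2) then alpha * phiL alpha' x.1 x'.1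
  else if (x.1 == x'.1) && (x.2 != x'.2) then beta * phiY x.2 x'.2
  else if (x.1 == x'.1) && (x.2 == x'.2) then (1 - alpha - beta) + beta * phiY x.2 x.2
  else 0.

Definition Accbar phiY alpha' alpha beta (x x' : 'I_n * Y) : R :=
  Num.min 1 ((phibar phiY alpha' alpha beta x' x * Pibar x') /
             (phibar phiY alpha' alpha beta x x' * Pibar x)).

Definition PMH phiY alpha' alpha beta (x x' : 'I_n * Y) : R :=
  if x != x' then phibar phiY alpha' alpha beta x x' * Accbar phiY alpha' alpha beta x x'
  else 1 - \sum_(z : 'I_n * Y | z != x)
             phibar phiY alpha' alpha beta x z * Accbar phiY alpha' alpha beta x z.
End MHAV.

From HB Require Import structures.
From mathcomp Require Import all_boot all_order all_algebra.
From mathcomp Require Import reals exp.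
From mathcomp Require Import zify.
Import Order.TTheory GRing.Theory Num.Theory.
Local Open Scope ring_scope.
Set Implicit Arguments. Unset Strict Implicit. Unset Printing Implicit Defensive.

(* A transition of the Metropolis-Hastings kernel is possible as soon as the
   proposal is possible in both directions.  A neighbour move in [Lambda] is
   always proposable both ways, and by the hypothesis on [b] so is every
   possible move of [phi_Y]; hence the transition graph contains every
   [Lambda]-ladder and a copy of the graph of [phi_Y] in each [Lambda]-slice,
   and it is strongly connected.  Aperiodicity comes from laziness: the
   off-diagonal proposal mass is at most [alpha + beta < 1]. *)

Definition pos_rel (R : numDomainType) (T : finType) (K : T -> T -> R) : rel T :=
  fun x y => 0 < K x y.

Lemma connect_homo (T T' : finType) (e : rel T) (e' : rel T') (h : T -> T') :
  {homo h : x y / e x y >-> connect e' x y} ->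
  {homo h : x y / connect e x y >-> connect e' x y}.
Proof.
move=> he x y /connectP[p]; elim: p x => [|z p IH] x /=.
  by move=> _ ->; exact: connect0.
by case/andP=> exz pz ylast; exact: connect_trans (he _ _ exz) (IH z pz ylast).
Qed.

Lemma sum_mul_indicator (R : nmodType) (T : finType) (c : T -> R) (a : T) :
  \sum_t c t *+ (t == a) = c a.
Proof. by under eq_bigr do rewrite mulrb; rewrite -big_mkcond big_pred1_eq. Qed.

Lemma sum_ord_inj_eq_le1 (R : numDomainType) (n : nat) (g : nat -> nat) (k : nat) :
  injective g -> \sum_(j < n) (g (val j) == k)%:R <= 1 :> R.
Proof.
move=> g_inj; case: (pickP (fun j : 'I_n => g j == k)) => [j /eqP gj|none].
  rewrite (bigD1 j) //= gj eqxx big1 ?addr0 // => i ij.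
  by rewrite -gj (inj_eq g_inj) val_eqE (negbTE ij).
by rewrite big1 // => j _; rewrite none.
Qed.

Section KernelGraph.
Variables (R : realType) (T : finType) (K : T -> T -> R).

Lemma kpow1 x y : kpow K 1 x y = K x y.
Proof. by rewrite /= (eq_bigr _ (fun z _ => mulr_natr _ _)) sum_mul_indicator. Qed.

Lemma aperiodic_diag_gt0 : (forall x, 0 < K x x) -> aperiodic K.
Proof.
move=> diag_gt0 x d hd; apply/eqP; rewrite -dvdn1; apply: hd => //.
by rewrite kpow1 diag_gt0.
Qed.

Hypothesis K_ge0 : forall x y, 0 <= K x y.

Lemma kpow_ge0 m x y : 0 <= kpow K m x y.
Proof.
elim: m x y => [|m IH] x y /=; first by rewrite ler0n.
by apply: sumr_ge0 => z _; apply: mulr_ge0.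
Qed.

Lemma kpowS_gt0 m x y z :
  0 < K x y -> 0 < kpow K m y z -> 0 < kpow K m.+1 x z.
Proof.
move=> Kxy Kyz /=; rewrite (bigD1 y) //=.
apply: (lt_le_trans (mulr_gt0 Kxy Kyz)); rewrite lerDl.
by apply: sumr_ge0 => w _; apply: mulr_ge0 => //; apply: kpow_ge0.
Qed.

Lemma connect_kpowP x y :
  reflect (exists m, 0 < kpow K m x y) (connect (pos_rel K) x y).
Proof.
apply: (iffP connectP) => [[p]|[m]].
  elim: p x => [|z p IH] x /=; first by move=> _ ->; exists 0%N; rewrite /= eqxx ltr01.
  case/andP=> Kxz pz ylast; have [m Kzy] := IH z pz ylast.
  by exists m.+1; apply: kpowS_gt0 Kxz Kzy.
elim: m x => [|m IH] x /=.
  by case: eqVneq => [->|]; [exists [::] | rewrite ltxx].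
move=> /gt_eqF/negbT/eqP/psumr_neq0P[z|z].
  by move=> _; apply: mulr_ge0 => //; apply: kpow_ge0.
rewrite /= mulr_ge0_gt0 ?kpow_ge0 // => /andP[Kxz /IH[p pz ylast]].
by exists (z :: p); rewrite //= [pos_rel _ _ _]Kxz.
Qed.

Lemma irreducible_connect :
  irreducible K <-> forall x y, connect (pos_rel K) x y.
Proof. by split=> h x y; apply/connect_kpowP. Qed.

End KernelGraph.

Section MetropolisHastings.
Variables (R : realType) (Y : finType) (f : Y -> R) (n : nat) (lam : 'I_n -> R)
  (phiY : Y -> Y -> R) (alpha' alpha beta : R).
Hypothesis lam_gt0 : forall i, 0 < lam i.
Hypothesis phiY_ge0 : forall y y', 0 <= phiY y y'.
Hypothesis phiY_sum1 : forall y, \sum_y' phiY y y' = 1.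
Hypothesis alpha'_gt0 : 0 < alpha'.
Hypothesis alpha'_lt1 : alpha' < 1.
Hypothesis alpha_gt0 : 0 < alpha.
Hypothesis beta_gt0 : 0 < beta.
Hypothesis alpha_beta_lt1 : alpha + beta < 1.

Local Notation Q := (@phibar R Y n phiY alpha' alpha beta).
Local Notation Acc := (Accbar lam f phiY alpha' alpha beta).
Local Notation P := (PMH lam f phiY alpha' alpha beta).

Lemma Pibar_gt0 x : 0 < Pibar lam f x.
Proof.
have piw_gt0 z : 0 < piw lam f z by apply: powR_gt0.
rewrite /Pibar divr_gt0 // /Zc (bigD1 x) //=.
apply: (lt_le_trans (piw_gt0 x)); rewrite lerDl.
by apply: sumr_ge0 => z _; exact: ltW.
Qed.

Lemma phiL_ge0 (i j : 'I_n) : 0 <= phiL alpha' i j.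
Proof.
rewrite /phiL; case: ifP => _; first by rewrite ler0n.
case: ifP => _; first by rewrite ler0n.
case: ifP => _; first exact: ltW.
by case: ifP => _ //; rewrite subr_ge0 ltW.
Qed.

Lemma phiL_sum_le1 (i : 'I_n) : \sum_j phiL alpha' i j <= 1.
Proof.
have sum_eq_le1 k : \sum_(j < n) (val j == k)%:R <= 1 :> R.
  exact: (@sum_ord_inj_eq_le1 _ _ id _ (@inj_id nat)).
rewrite /phiL; case: (val i == 0%N) => /=; first exact: sum_eq_le1.
case: (val i == n.-1) => /=; first exact: sum_eq_le1.
have alpha'_ge0 : 0 <= alpha' by exact: ltW.
have alpha'_le1 : 0 <= 1 - alpha' by rewrite subr_ge0 ltW.
apply: (le_trans (y := \sum_(j : 'I_n) (alpha' * (val j == (val i).+1)%:R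
                              + (1 - alpha') * ((val j).+1 == val i)%:R))).
  apply: ler_sum => j _; case: eqP => _.
    by rewrite mulr1 lerDl mulr_ge0 ?ler0n.
  by case: eqP => _; rewrite mulr0 add0r ?mulr1 // mulr0.
rewrite big_split /= -!mulr_sumr.
apply: (@le_trans _ _ (alpha' + (1 - alpha'))); last by rewrite addrC subrK.
rewrite lerD // ler_piMr ?sum_eq_le1 //.
exact: (@sum_ord_inj_eq_le1 _ _ succn _ succn_inj).
Qed.

Lemma phibar_ge0 x x' : 0 <= Q x x'.
Proof.
rewrite /phibar; case: ifP => _; first by rewrite mulr_ge0 ?phiL_ge0 ?ltW.
case: ifP => _; first by rewrite mulr_ge0 ?phiY_ge0 ?ltW.
case: ifP => _ //; rewrite addr_ge0 ?mulr_ge0 ?phiY_ge0 ?ltW //.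
by rewrite -addrA -opprD subr_gt0.
Qed.

Lemma Accbar_ge0 x x' : 0 <= Acc x x'.
Proof.
rewrite /Accbar le_min ler01 /=; apply: divr_ge0; apply: mulr_ge0;
  by rewrite ?phibar_ge0 // ltW // Pibar_gt0.
Qed.

Lemma Accbar_le1 x x' : Acc x x' <= 1.
Proof. by rewrite /Accbar ge_min lexx. Qed.

Lemma PMH_gt0 x x' : x != x' -> 0 < Q x x' -> 0 < Q x' x -> 0 < P x x'.
Proof.
move=> neq Qxx' Qx'x; rewrite /PMH neq mulr_gt0 // /Accbar lt_min ltr01 /=.
by rewrite divr_gt0 // mulr_gt0 // Pibar_gt0.
Qed.

Lemma phibar_offdiag (i : 'I_n) y z : z != (i, y) ->
  Q (i, y) z = alpha * phiL alpha' i z.1 *+ (z.2 == y) + beta * phiY y z.2 *+ (z.1 == i).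
Proof.
case: z => j y'; rewrite xpair_eqE negb_and /phibar /=.
case: (eqVneq j i) => [->|ji]; case: (eqVneq y' y) => [->|y'y] //=;
  by rewrite ?eqxx //= => _; rewrite ?mulr0n ?mulr1n ?add0r ?addr0.
Qed.

Lemma phibar_offdiag_sum_le x : \sum_(z | z != x) Q x z <= alpha + beta.
Proof.
case: x => i y.
pose g z := alpha * phiL alpha' i z.1 *+ (z.2 == y) + beta * phiY y z.2 *+ (z.1 == i).
have g_ge0 z : 0 <= g z.
  by rewrite /g addr_ge0 ?mulrn_wge0 ?mulr_ge0 ?phiL_ge0 ?phiY_ge0 ?ltW.
have pair_sum (F : 'I_n * Y -> R) : \sum_z F z = \sum_j \sum_y' F (j, y').
  by rewrite pair_bigA; apply: eq_bigr => -[].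
rewrite (eq_bigr g) => [|z /phibar_offdiag //].
apply: (le_trans (y := \sum_z g z)).
  by rewrite [leRHS](bigD1 (i, y)) //= lerDr g_ge0.
rewrite /g big_split !pair_sum /=.
rewrite (eq_bigr _ (fun j _ => sum_mul_indicator (fun _ => alpha * phiL alpha' i j) y)).
rewrite exchange_big (eq_bigr _ (fun y' _ => sum_mul_indicator (fun _ => beta * phiY y y') i)).
by rewrite -!mulr_sumr phiY_sum1 mulr1 lerD2r ler_piMr ?phiL_sum_le1 ?ltW.
Qed.

Lemma PMH_diag_gt0 x : 0 < P x x.
Proof.
rewrite /PMH eqxx /= subr_gt0; apply: (le_lt_trans _ alpha_beta_lt1).
apply: le_trans (phibar_offdiag_sum_le x); apply: ler_sum => z _.
by rewrite ler_piMr ?phibar_ge0 ?Accbar_le1.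
Qed.

Lemma PMH_ge0 x x' : 0 <= P x x'.
Proof.
case: (eqVneq x x') => [<-|neq]; first exact/ltW/PMH_diag_gt0.
by rewrite /PMH neq mulr_ge0 ?phibar_ge0 ?Accbar_ge0.
Qed.

Lemma phiL_succ_gt0 (i j : 'I_n) :
  val j = (val i).+1 -> 0 < phiL alpha' i j /\ 0 < phiL alpha' j i.
Proof.
have jn := ltn_ord j.
move=> /= ji; rewrite /phiL /= ji; split.
  case: eqP => [->|_]; first by rewrite ltr0n.
  by case: eqP => [/= ilast|_]; [exfalso; lia | rewrite eqxx].
case: eqP => [/= ?|_]; first by exfalso; lia.
case: eqP => [/= jlast|_].
  by have -> : nat_of_ord i == n.-2 by apply/eqP; lia.
case: eqP => [/= iSSi|_]; first by exfalso; lia.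
by rewrite eqxx subr_gt0.
Qed.

Lemma PMH_lam_gt0 (i j : 'I_n) y :
  val j = (val i).+1 -> 0 < P (i, y) (j, y) /\ 0 < P (j, y) (i, y).
Proof.
move=> ji; have [Lij Lji] := phiL_succ_gt0 ji.
have ij : i != j by apply/eqP => ij; move: ji; rewrite ij; lia.
have neq : (i, y) != (j, y) by rewrite xpair_eqE negb_and ij.
have Qij : 0 < Q (i, y) (j, y) by rewrite /phibar /= ij eqxx mulr_gt0.
have Qji : 0 < Q (j, y) (i, y) by rewrite /phibar /= eq_sym ij eqxx mulr_gt0.
by split; apply: PMH_gt0; rewrite // eq_sym.
Qed.

Variable b : R.
Hypothesis b_gt0 : 0 < b.
Hypothesis ratio_gt : forall (i : 'I_n) (y y' : Y), 0 < phiY y y' ->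
  (Pibar lam f (i, y') * phiY y' y) / (Pibar lam f (i, y) * phiY y y') > b.

Lemma PMH_Y_gt0 i y y' : y != y' -> 0 < phiY y y' -> 0 < P (i, y) (i, y').
Proof.
move=> yy' Kyy'.
have Ky'y : 0 < phiY y' y.
  rewrite lt_def phiY_ge0 andbT; apply/eqP => Ky'y0.
  by have := ratio_gt i Kyy'; rewrite Ky'y0 mulr0 mul0r => /(lt_trans b_gt0); rewrite ltxx.
have neq : (i, y) != (i, y') by rewrite xpair_eqE negb_and yy' orbT.
apply: PMH_gt0 => //; rewrite /phibar /= eqxx /=.
  by rewrite yy' mulr_gt0.
by rewrite eq_sym yy' mulr_gt0.
Qed.

Lemma connect_PMH_lam y (i j : 'I_n) : connect (pos_rel P) (i, y) (j, y).
Proof.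
have n_gt0 : (0 < n)%N := leq_ltn_trans (leq0n _) (ltn_ord i).
pose i0 := Ordinal n_gt0.
suff ladder k : connect (pos_rel P) (i0, y) (k, y) /\ connect (pos_rel P) (k, y) (i0, y).
  by have [_ i_i0] := ladder i; have [i0_j _] := ladder j; exact: connect_trans i_i0 i0_j.
case: k => m; elim: m => [|m IH] mn.
  by split; apply: eq_connect0; congr pair; apply: val_inj.
have [up down] := @PMH_lam_gt0 (Ordinal (ltnW mn)) (Ordinal mn) y erefl.
have [IH1 IH2] := IH (ltnW mn).
by split; [exact: connect_trans IH1 (connect1 up) | exact: connect_trans (connect1 down) IH2].
Qed.

Lemma connect_PMH_Y i y y' :
  connect (pos_rel phiY) y y' -> connect (pos_rel P) (i, y) (i, y').
Proof.
apply: (connect_homo (h := pair i)) => {}y {}y' Kyy'.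
case: (eqVneq y y') => [->|yy']; first exact: connect0.
exact/connect1/PMH_Y_gt0.
Qed.

Lemma irreducible_PMH : irreducible phiY -> irreducible P.
Proof.
move=> /(irreducible_connect phiY_ge0) phiY_conn.
apply/(irreducible_connect PMH_ge0) => -[i y] [j y'].
exact: connect_trans (connect_PMH_lam y i j) (connect_PMH_Y j (phiY_conn y y')).
Qed.

Lemma aperiodic_PMH : aperiodic P.
Proof. exact: aperiodic_diag_gt0 PMH_diag_gt0. Qed.

End MetropolisHastings.

Theorem lemma14 (R : realType) (Y : finType) (y0 : Y) (f : Y -> R)
    (n : nat) (lam : 'I_n -> R) (phiY : Y -> Y -> R) (alpha' alpha beta b : R) :
  (2 <= n)%N ->
  (forall i, 0 < lam i) ->
  (forall i j : 'I_n, (val i < val j)%N -> lam i < lam j) ->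
  markov_kernel phiY -> irreducible phiY ->
  0 < alpha' < 1 -> 0 < alpha < 1 -> 0 < beta < 1 -> alpha + beta < 1 ->
  0 < b ->
  (forall (i : 'I_n) (y y' : Y), 0 < phiY y y' ->
     (Pibar lam f (i, y') * phiY y' y) / (Pibar lam f (i, y) * phiY y y') > b) ->
  irreducible (PMH lam f phiY alpha' alpha beta) /\
  aperiodic (PMH lam f phiY alpha' alpha beta).
Proof.
move=> _ lam_gt0 _ [phiY_ge0 phiY_sum1] phiY_irr /andP[alpha'_gt0 alpha'_lt1]
  /andP[alpha_gt0 _] /andP[beta_gt0 _] alpha_beta_lt1 b_gt0 ratio_gt.
split; last exact: aperiodic_PMH.
exact: irreducible_PMH ratio_gt phiY_irr.
Qed.
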